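(* Let $k$ be a field of prime characteristic $p$, let $d$ be a positive integer, and let $S^{(d)}_1$ be the $T$-space of $k_0\langle X\rangle$ generated by $S^{(d)}(x_1,\ldots,x_d)=\sum_{\sigma\in\Sigma_d}\prod_{i=1}^d x_{\sigma(i)}$. Then for any $u,v\in k_0\langle X\rangle$: (i) $(S^{(d)}_1uv)^S\subseteq S^{(d)}_1+(S^{(d)}_1u)^S+(S^{(d)}_1v)^S$; and (ii) $(uvS^{(d)}_1)^S\subseteq S^{(d)}_1+(uS^{(d)}_1)^S+(vS^{(d)}_1)^S$.
   Context: $X=\{x_1,x_2,\ldots\}$ is countably infinite; $k_0\langle X\rangle$ is the free associative (non-unital) $k$-algebra on $X$. A $T$-space is a $k$-subspace of $k_0\langle X\rangle$ invariant under every algebra endomorphism of $k_0\langle X\rangle$; $(A)^S$ is the $T$-space generated by a subset $A$. $\Sigma_d$ is the symmetric group on $d$ letters. For a subset $A$ and an element $u$, $Au=\{au:a\in A\}$, $uA=\{ua:a\in A\}$, and $Auv=\{auv: a\in A\}$. *)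

From mathcomp Require Import all_boot all_order all_algebra all_fingroup.
Set Implicit Arguments. Unset Strict Implicit. Unset Printing Implicit Defensive.
Import GRing.Theory.
Local Open Scope ring_scope.

(* Words in the letters of X = {x_1, x_2, ...}; the letter n : nat stands
   for x_(n+1).  An element of the free algebra is represented by its
   coefficient function  word -> k  (required to be finitely supported). *)
Definition word := seq nat.

Section FreeAlg.
Variable k : fieldType.

Definition fpoly := word -> k.

Definition fin_supp (f : fpoly) : Prop :=
  exists s : seq word, forall w, f w != 0 -> w \in s.

Definition in_k0X (f : fpoly) : Prop := fin_supp f /\ f [::] = 0.

Definition padd (f g : fpoly) : fpoly := fun w => f w + g w.
Definition pscale (c : k) (f : fpoly) : fpoly := fun w => c * f w.
Definition pzero : fpoly := fun _ => 0.
Definition pmul (f g : fpoly) : fpoly :=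
  fun w => \sum_(i < (size w).+1) f (take i w) * g (drop i w).

Definition is_endo (phi : fpoly -> fpoly) : Prop :=
  (forall f, in_k0X f -> in_k0X (phi f)) /\
  (forall f g, in_k0X f -> in_k0X g -> phi (padd f g) = padd (phi f) (phi g)) /\
  (forall c f, in_k0X f -> phi (pscale c f) = pscale c (phi f)) /\
  (forall f g, in_k0X f -> in_k0X g -> phi (pmul f g) = pmul (phi f) (phi g)).

Definition is_subspace (V : fpoly -> Prop) : Prop :=
  (forall f, V f -> in_k0X f) /\ V pzero /\
  (forall f g, V f -> V g -> V (padd f g)) /\
  (forall c f, V f -> V (pscale c f)).

Definition is_Tspace (V : fpoly -> Prop) : Prop :=
  is_subspace V /\ forall phi f, is_endo phi -> V f -> V (phi f).

Definition Tgen (A : fpoly -> Prop) : fpoly -> Prop :=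
  fun f => forall V, is_Tspace V -> (forall a, A a -> V a) -> V f.

Definition Sd (d : nat) : fpoly :=
  fun w => \sum_(s : 'S_d) (if w == [seq nat_of_ord (s i) | i <- enum 'I_d]
                            then 1 else 0).

Definition Sd1 (d : nat) : fpoly -> Prop := Tgen (fun f => f = Sd d).

Definition setMr (A : fpoly -> Prop) (u : fpoly) : fpoly -> Prop :=
  fun f => exists2 a, A a & f = pmul a u.
Definition setMl (u : fpoly) (A : fpoly -> Prop) : fpoly -> Prop :=
  fun f => exists2 a, A a & f = pmul u a.

Definition sum3 (A B C : fpoly -> Prop) : fpoly -> Prop :=
  fun f => exists a b c, [/\ A a, B b, C c & f = padd (padd a b) c].

End FreeAlg.

From mathcomp Require Import all_boot all_order all_algebra all_fingroup zify.
From mathcomp Require Import boolp.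
From Stdlib Require Import ClassicalEpsilon.
From HB Require Import structures.
Set Implicit Arguments. Unset Strict Implicit. Unset Printing Implicit Defensive.
Import GRing.Theory.
Local Open Scope ring_scope.

(* Write [sym c I] for the sum, over all orderings [t] of the index list [I],
   of the products [c (t 1) * ... * c (t m)], so that S^(d)(c_0, ..., c_(d-1))
   is [sym c [0; ...; d-1]].  The T-space S^(d)_1 is spanned by the
   substitution instances [sym c [0; ...; d-1]] with [c] valued in k_0<X>.
   Expanding [sym c (m1 :: m2 :: I)] along [m2] and along [m1] gives
   [sym c (m1 :: I) * c m2 = sym c (m2 :: I) * c m1 + e] with [e] in
   S^(d)_1.  Used once with [(c m1, c m2) = (s_n, u)] and once with
   [(u, s_n v)] this turns [S(s) u v] into [a + x u + y v] with [a], [x], [y]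
   in S^(d)_1; (ii) is the same computation in the opposite ring. *)

Section SymmetricProduct.
Variable R : pzRingType.
Implicit Types (c : nat -> R) (I J : seq nat).

Definition sym c I : R := \sum_(t <- permutations I) \prod_(l <- t) c l.
Definition upd c (i : nat) (x : R) : nat -> R := fun j => if j == i then x else c j.

Lemma sym_perm c I J : perm_eq I J -> sym c I = sym c J.
Proof. by move=> eIJ; apply: perm_big; apply: perm_permutations. Qed.

Lemma sym_nil c : sym c [::] = 1.
Proof. by rewrite /sym /= big_seq1 big_nil. Qed.

Lemma eq_in_sym c1 c2 I : {in I, c1 =1 c2} -> sym c1 I = sym c2 I.
Proof.
move=> e12; apply: eq_big_seq => t; rewrite mem_permutations => pt.
by apply: eq_big_seq => j jt; apply: e12; rewrite -(perm_mem pt).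
Qed.

Lemma sym_cons_sum c I : uniq I -> I != [::] ->
  sym c I = \sum_(x <- I) c x * sym c (rem x I).
Proof.
move=> uI nI; rewrite /sym (perm_big _ (permutationsE _)); last by case: (I) nI.
rewrite big_allpairs_dep undup_id //; apply: eq_bigr => x _.
by rewrite mulr_sumr; apply: eq_bigr => t _; rewrite big_cons.
Qed.

Lemma sym_nth c J : uniq J ->
  sym c J = sym (fun i => c (nth 0%N J i)) (iota 0 (size J)).
Proof.
move=> uJ; set g := nth 0%N J.
have g_inj : {in iota 0 (size J) &, injective g}.
  move=> i j; rewrite !mem_iota add0n /= => ltiJ ltjJ /eqP.
  by rewrite nth_uniq // => /eqP.
have eJ : perm_eq (permutations J) (map (map g) (permutations (iota 0 (size J)))).
  apply: uniq_perm; first exact: permutations_uniq.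
    rewrite map_inj_in_uniq ?permutations_uniq // => t1 t2.
    rewrite !mem_permutations => p1 p2; apply: (inj_in_map g_inj); apply/allP => x.
      by rewrite (perm_mem p1).
    by rewrite (perm_mem p2).
  move=> t; rewrite mem_permutations.
  apply/(perm_iotaP 0%N)/mapP => -[Is pIs ->]; exists Is => //.
    by rewrite mem_permutations.
  by rewrite -mem_permutations.
by rewrite /sym (perm_big _ eJ) big_map; apply: eq_bigr => t _; rewrite big_map.
Qed.

Lemma sum_rem_exchange I (G : nat -> nat -> R) : uniq I ->
  \sum_(i <- I) \sum_(x <- I | x != i) G i x = \sum_(x <- I) \sum_(i <- rem x I) G i x.
Proof.
move=> uI.
transitivity (\sum_(i <- I) \sum_(x <- I) (if x != i then G i x else 0)).
  by apply: eq_bigr => i _; rewrite big_mkcond.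
rewrite exchange_big; apply: eq_bigr => x _.
by rewrite rem_filter // big_filter [RHS]big_mkcond; apply: eq_bigr => i _; rewrite /= eq_sym.
Qed.

(* An ordering of [m :: I] either ends with [m], or has [m] just before some
   [i]; merging [m] into [i] gives the second sum. *)
Lemma sym_consE c m I : uniq (m :: I) ->
  sym c (m :: I) = sym c I * c m + \sum_(i <- I) sym (upd c i (c m * c i)) I.
Proof.
move: {2}(size I) (erefl (size I)) => n; elim: n I c m => [|n IH] I c m.
  move/size0nil => -> _; rewrite sym_cons_sum // big_seq1 /= eqxx sym_nil big_nil.
  by rewrite mulr1 mul1r addr0.
move=> sI /= /andP[mI uI].
have nI : I != [::] by case: (I) sI.
rewrite sym_cons_sum /= ?mI ?uI // big_cons eqxx.
rewrite (eq_big_seq (fun x => c x * (sym c (rem x I) * c m +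
     \sum_(i <- rem x I) sym (upd c i (c m * c i)) (rem x I)))); last first.
  move=> x xI; have mx : (m == x) = false by apply/eqP => e; rewrite e xI in mI.
  rewrite mx IH //; first by rewrite size_rem // sI.
  by rewrite /= rem_uniq // andbT; apply: contra mI; apply: mem_rem.
rewrite (sym_cons_sum c uI nI) mulr_suml.
under [X in _ = _ + X]eq_bigr => i _ do rewrite (sym_cons_sum _ uI nI).
under [X in _ = _ + X]eq_big_seq => i iI do rewrite (bigD1_seq i iI uI) /= /upd eqxx.
rewrite big_split /=.
under [X in _ = _ + (X + _)]eq_big_seq => i iI.
  rewrite (eq_in_sym (c2 := c)); last first.
    by move=> j; rewrite mem_rem_uniq // inE => /andP[/negbTE ->].
  over.
under [X in _ = _ + (_ + X)]eq_bigr => i _.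
  under eq_bigr => x xi do rewrite (negbTE xi).
  over.
rewrite sum_rem_exchange //.
under [X in _ = _ + (X + _)]eq_bigr => i _ do rewrite -mulrA.
rewrite -[X in _ = _ + (X + _)]mulr_sumr.
under [X in _ + X = _]eq_bigr => i _ do rewrite mulrDr mulr_sumr.
rewrite big_split /= addrCA; congr (_ + (_ + _)).
by apply: eq_bigr => i _; rewrite mulrA.
Qed.

Lemma sym_exchange c m1 m2 I : uniq (m1 :: m2 :: I) ->
  sym c (m1 :: I) * c m2 + \sum_(i <- m1 :: I) sym (upd c i (c m2 * c i)) (m1 :: I) =
  sym c (m2 :: I) * c m1 + \sum_(i <- m2 :: I) sym (upd c i (c m1 * c i)) (m2 :: I).
Proof.
have swap12 : perm_eq (m1 :: m2 :: I) (m2 :: m1 :: I).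
  by apply/seq.permP => P /=; rewrite addnCA.
move=> u12; have u21 : uniq (m2 :: m1 :: I) by rewrite -(perm_uniq swap12).
by rewrite -!sym_consE // (sym_perm _ swap12).
Qed.

End SymmetricProduct.

Lemma sym_converse (R : pzRingType) (c : nat -> R) (I : seq nat) : @sym R^c c I = sym c I.
Proof.
rewrite /sym; under eq_bigr do rewrite rev_prodr.
have hrev : perm_eq (permutations I) (map rev (permutations I)).
  apply: uniq_perm; rewrite ?permutations_uniq // ?map_inj_uniq ?permutations_uniq //.
    exact: (can_inj revK).
  move=> t; apply/idP/mapP => [pt | [t' + ->]].
    by exists (rev t); rewrite ?revK // mem_permutations perm_rev -mem_permutations.
  by rewrite !mem_permutations perm_rev.
by rewrite [RHS](perm_big _ hrev) big_map.
Qed.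

Lemma perm_iotaS n : perm_eq (n :: iota 0 n) (iota 0 n.+1).
Proof. by rewrite -addn1 iotaD add0n perm_sym perm_catC. Qed.

Section SymDecomposition.
Variables (R : pzRingType) (Q V : R -> Prop) (n : nat).
Hypothesis QM : forall x y, Q x -> Q y -> Q (x * y).
Hypothesis V0 : V 0.
Hypothesis VB : forall x y, V x -> V y -> V (x - y).
Hypothesis Vsym : forall c, (forall l, Q (c l)) -> V (sym c (iota 0 n.+1)).

Let VD x y : V x -> V y -> V (x + y).
Proof.
move=> Vx Vy; have -> : x + y = x - (0 - y) by rewrite sub0r opprK.
by apply: VB => //; apply: VB.
Qed.

Let V_sum I (r : seq I) (F : I -> R) : (forall i, V (F i)) -> V (\sum_(i <- r) F i).
Proof. by move=> VF; elim: r => [|i r IH]; rewrite ?big_nil ?big_cons //; apply: VD. Qed.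

Let V_sym c J : (forall l, Q (c l)) -> uniq J -> size J = n.+1 -> V (sym c J).
Proof. by move=> Qc uJ sJ; rewrite sym_nth // sJ; apply: Vsym. Qed.

Let Q_upd c i x : (forall l, Q (c l)) -> Q x -> forall l, Q (upd c i x l).
Proof. by move=> Qc Qx l; rewrite /upd; case: ifP. Qed.

Lemma sym_mulr_exchange c m1 m2 I : (forall l, Q (c l)) ->
  uniq (m1 :: m2 :: I) -> size I = n ->
  exists2 e, V e & sym c (m1 :: I) * c m2 = sym c (m2 :: I) * c m1 + e.
Proof.
move=> Qc u12 sI.
have VX m m' : uniq (m :: I) ->
    V (\sum_(i <- m :: I) sym (upd c i (c m' * c i)) (m :: I)).
  move=> uI; apply: V_sum => i; apply: V_sym; rewrite /= ?sI //.
  by apply: Q_upd => //; apply: QM.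
have u1 : uniq (m1 :: I).
  by move: u12; rewrite /= inE negb_or => /and3P[/andP[_ ->] _ ->].
have u2 : uniq (m2 :: I) by case/andP: u12.
eexists; first by apply: VB; [apply: (VX m2 m1 u2) | apply: (VX m1 m2 u1)].
by apply: (addIr (\sum_(i <- m1 :: I) sym (upd c i (c m2 * c i)) (m1 :: I)));
  rewrite sym_exchange // -addrA subrK.
Qed.

Lemma sym_mul2r_decomposition s u v : (forall l, Q (s l)) -> Q u -> Q v ->
  exists a x y, [/\ V a, V x, V y & sym s (iota 0 n.+1) * u * v = a + x * u + y * v].
Proof.
move=> Qs Qu Qv; set I := iota 0 n.
pose c := upd (upd s n.+1 u) n.+2 (s n * v).
have Qc : forall l, Q (c l) by apply: Q_upd; [apply: Q_upd | apply: QM].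
have cs : {in n :: I, c =1 s}.
  by move=> j; rewrite inE mem_iota => jI; rewrite /c /upd !ifN_eq //; lia.
have cu : c n.+1 = u by rewrite /c /upd ifN_eq ?eqxx //; lia.
have csv : c n.+2 = s n * v by rewrite /c /upd eqxx.
have uI m1 m2 : (n <= m1)%N -> (m1 < m2)%N -> uniq (m1 :: m2 :: I).
  by move=> le1 lt12; rewrite /= !inE !mem_iota iota_uniq; lia.
have [e1 Ve1 E1] := sym_mulr_exchange Qc (uI n n.+1 (leqnn n) (ltnSn n)) (size_iota _ _).
have [e2 Ve2 E2] := sym_mulr_exchange Qc (uI n.+1 n.+2 (leqnSn n) (ltnSn _)) (size_iota _ _).
rewrite cu (cs n) ?mem_head // in E1; rewrite csv cu in E2.
exists e2, (sym c (n.+2 :: I)), e1; split=> //.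
  by apply: V_sym; rewrite /= ?size_iota // mem_iota iota_uniq; lia.
rewrite -(sym_perm _ (perm_iotaS n)) -(eq_in_sym cs) E1 mulrDl -mulrA E2.
by rewrite [_ * u + _]addrC.
Qed.

End SymDecomposition.

Lemma sym_mul2l_decomposition (R : pzRingType) (Q V : R -> Prop) (n : nat) :
  (forall x y, Q x -> Q y -> Q (x * y)) -> V 0 ->
  (forall x y, V x -> V y -> V (x - y)) ->
  (forall c, (forall l, Q (c l)) -> V (sym c (iota 0 n.+1))) ->
  forall s u v, (forall l, Q (s l)) -> Q u -> Q v ->
  exists a x y, [/\ V a, V x, V y & u * v * sym s (iota 0 n.+1) = a + u * x + v * y].
Proof.
move=> QM V0 VB Vsym s u v Qs Qu Qv.
have QMc (x y : R^c) : Q x -> Q y -> Q (x * y) by move=> Qx Qy; apply: QM.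
have Vsymc (c : nat -> R^c) : (forall l, Q (c l)) -> V (sym c (iota 0 n.+1)).
  by rewrite sym_converse; apply: Vsym.
have [a [x [y [Va Vx Vy]]]] := sym_mul2r_decomposition QMc V0 VB Vsymc Qs Qv Qu.
rewrite sym_converse => E.
exists a, y, x; split=> //; rewrite -mulrA.
by rewrite [RHS]addrAC; exact: E.
Qed.

(* The unital algebra k<X>, carried by [fpoly k]; k_0<X> is cut out by [in_k0X]. *)
Definition FP (k : fieldType) : Type := fpoly k.
HB.instance Definition _ (k : fieldType) := Choice.copy (FP k) (word -> k).

Section ConcatenationRing.
Variable k : fieldType.
Implicit Types f g h : fpoly k.

Definition popp f : fpoly k := fun w => - f w.
Definition pone : fpoly k := fun w => if w is [::] then 1 else 0.

Lemma paddA : associative (@padd k).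
Proof. by move=> f g h; apply: funext => w; rewrite /padd addrA. Qed.
Lemma paddC : commutative (@padd k).
Proof. by move=> f g; apply: funext => w; rewrite /padd addrC. Qed.
Lemma add0p : left_id (@pzero k) (@padd k).
Proof. by move=> f; apply: funext => w; rewrite /padd /pzero add0r. Qed.
Lemma addNp : left_inverse (@pzero k) popp (@padd k).
Proof. by move=> f; apply: funext => w; rewrite /padd /pzero /popp addNr. Qed.

Lemma drop_eq_nil (w : word) i : (i <= size w)%N -> (drop i w == [::]) = (i == size w).
Proof. by move=> le_iw; rewrite -size_eq0 size_drop subn_eq0 eqn_leq le_iw. Qed.

Lemma mul1p : left_id pone (@pmul k).
Proof.
move=> f; apply: funext => w; rewrite /pmul big_ord_recl /= take0 drop0 mul1r.
by rewrite big1 ?addr0 // => -[i lti] _; case: w lti => //= *; rewrite mul0r.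
Qed.

Lemma mulp1 : right_id pone (@pmul k).
Proof.
move=> f; apply: funext => w; rewrite /pmul big_ord_recr /= take_size drop_size mulr1.
rewrite big1 ?add0r // => i _ /=.
have : drop i w != [::] by rewrite drop_eq_nil ?ltn_eqF // ltnW.
by rewrite /pone; case: (drop i w) => [/eqP // | a t _]; rewrite mulr0.
Qed.

Lemma mulpDl : left_distributive (@pmul k) (@padd k).
Proof.
move=> f g h; apply: funext => w; rewrite /pmul /padd -big_split /=.
by apply: eq_bigr => i _; rewrite mulrDl.
Qed.
Lemma mulpDr : right_distributive (@pmul k) (@padd k).
Proof.
move=> f g h; apply: funext => w; rewrite /pmul /padd -big_split /=.
by apply: eq_bigr => i _; rewrite mulrDr.
Qed.

Lemma sum_nat_triangle (F : nat -> nat -> k) n :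
  \sum_(0 <= i < n.+1) \sum_(0 <= j < i.+1) F j i =
  \sum_(0 <= j < n.+1) \sum_(0 <= l < n.+1 - j) F j (j + l)%N.
Proof.
elim: n => [|n IH]; first by rewrite !big_nat1.
rewrite big_nat_recr //= IH [RHS]big_nat_recr //= subSnn big_nat1 addn0.
rewrite [X in _ + X = _]big_nat_recr //= addrA; congr (_ + _).
rewrite -big_split; apply: eq_big_nat => j /andP[_ ltj] /=.
by rewrite (subSn (ltnW ltj)) big_nat_recr //= subnKC // ltnW.
Qed.

(* Both sides are sums of f (w_1) g (w_2) h (w_3) over the splittings w = w_1 w_2 w_3. *)
Lemma mulpA : associative (@pmul k).
Proof.
move=> f g h; apply: funext => w; rewrite /pmul.
pose F j i := f (take j w) * g (take (i - j) (drop j w)) * h (drop i w).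
have -> : \sum_(i < (size w).+1) (\sum_(j < (size (take i w)).+1)
      f (take j (take i w)) * g (drop j (take i w))) * h (drop i w) =
    \sum_(0 <= i < (size w).+1) \sum_(0 <= j < i.+1) F j i.
  rewrite big_mkord; apply: eq_bigr => -[i lti] _ /=.
  rewrite mulr_suml size_takel // big_mkord; apply: eq_bigr => -[j /= ltj] _.
  by rewrite /F take_takel // take_drop subnK.
rewrite sum_nat_triangle big_mkord; apply: eq_bigr => -[j ltj] _ /=.
rewrite mulr_sumr size_drop -subSn // big_mkord; apply: eq_bigr => -[l ltl] _ /=.
by rewrite /F drop_drop addKn addnC mulrA.
Qed.

End ConcatenationRing.

HB.instance Definition _ (k : fieldType) := GRing.isPzRing.Build (FP k)
  (@paddA k) (@paddC k) (@add0p k) (@addNp k) (@mulpA k) (@mul1p k) (@mulp1 k)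
  (@mulpDl k) (@mulpDr k).

Section FreeAlgebra.
Variable k : fieldType.
Local Notation R := (FP k).
Implicit Types f g h : R.

Lemma evalD f g w : (f + g) w = f w + g w. Proof. by []. Qed.
Lemma eval_sum I (r : seq I) (P : pred I) (F : I -> R) w :
  (\sum_(i <- r | P i) F i) w = \sum_(i <- r | P i) F i w.
Proof.
elim: r => [|a r IH]; first by rewrite !big_nil.
by rewrite !big_cons; case: (P a); rewrite ?evalD IH.
Qed.

Lemma mulE f g w : (f * g) w = \sum_(i < (size w).+1) f (take i w) * g (drop i w).
Proof. by []. Qed.
Lemma paddE f g : padd f g = f + g. Proof. by []. Qed.
Lemma pmulE f g : pmul f g = f * g. Proof. by []. Qed.

Lemma mul_nil f g : (f * g) [::] = f [::] * g [::].
Proof. by rewrite mulE big_ord_recl big_ord0 addr0. Qed.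

Definition cst (c : k) : R := fun w => if w is [::] then c else 0.
Definition delta (v : word) : R := fun w => if w == v then 1 else 0.

Lemma cst_mulE c f w : (cst c * f) w = c * f w.
Proof.
rewrite mulE big_ord_recl /= take0 drop0 big1 ?addr0 // => i _.
by case: w i => [|a w] [i lti] //=; rewrite mul0r.
Qed.

Lemma cstC c f : cst c * f = f * cst c.
Proof.
apply: funext => w; rewrite cst_mulE mulE big_ord_recr /= take_size drop_size.
rewrite big1 => [|i _ /=]; first by rewrite add0r mulrC.
have : drop i w != [::] by rewrite drop_eq_nil ?ltn_eqF // ltnW.
by case: (drop i w) => [/eqP // | a t _]; rewrite mulr0.
Qed.

Lemma cstM a b : cst (a * b) = cst a * cst b.
Proof. by apply: funext => w; rewrite cst_mulE; case: w => [|x w] /=; rewrite ?mulr0. Qed.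
Lemma cstD a b : cst (a + b) = cst a + cst b.
Proof. by apply: funext => w; rewrite evalD; case: w => [|x w] /=; rewrite ?addr0. Qed.
Lemma cst0 : cst 0 = 0.
Proof. by apply: funext => -[]. Qed.
Lemma cst1 : cst 1 = 1.
Proof. by []. Qed.
Lemma pscaleE c f : pscale c f = cst c * f.
Proof. by apply: funext => w; rewrite cst_mulE. Qed.

Lemma delta_mul v1 v2 : delta v1 * delta v2 = delta (v1 ++ v2).
Proof.
apply: funext => w; rewrite mulE /delta.
case: eqP => [->|ne].
  have h : (size v1 < (size (v1 ++ v2)).+1)%N by rewrite size_cat ltnS leq_addr.
  rewrite (bigD1 (Ordinal h)) //= take_size_cat // drop_size_cat // !eqxx mulr1.
  rewrite big1 ?addr0 // => i /eqP ne; case: eqP => [e|]; last by rewrite mul0r.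
  have := congr1 size e; rewrite size_takel; last by rewrite -ltnS.
  by move=> ei; case: ne; apply: val_inj.
rewrite big1 // => i _; case: eqP => [e1|]; last by rewrite mul0r.
case: eqP => [e2|]; last by rewrite mulr0.
by case: ne; rewrite -e1 -e2 cat_take_drop.
Qed.

Definition covers f (s : seq word) := forall w, f w != 0 -> w \in s.

Lemma fin_suppD f g : fin_supp f -> fin_supp g -> fin_supp (f + g).
Proof.
move=> [s hs] [t ht]; exists (s ++ t) => w; rewrite evalD mem_cat.
by case: (f w =P 0) => [->|/eqP /hs ->] //; rewrite add0r => /ht ->; rewrite orbT.
Qed.
Lemma fin_supp0 : fin_supp (0 : R).
Proof. by exists [::] => w; rewrite eqxx. Qed.
Lemma fin_suppM f g : fin_supp f -> fin_supp g -> fin_supp (f * g).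
Proof.
move=> [s hs] [t ht]; exists [seq a ++ b | a <- s, b <- t] => w; rewrite mulE => nz.
have [i nzi | all0] := pickP (fun i : 'I_(size w).+1 => f (take i w) * g (drop i w) != 0).
  rewrite -(cat_take_drop i w); apply: allpairs_f.
    by apply: hs; apply: contraNneq nzi => ->; rewrite mul0r.
  by apply: ht; apply: contraNneq nzi => ->; rewrite mulr0.
by move: nz; rewrite big1 ?eqxx // => i _; move: (all0 i) => /negbFE /eqP.
Qed.
Lemma fin_supp_cst c : fin_supp (cst c).
Proof. by exists [:: [::]] => -[|a w] //=; rewrite eqxx. Qed.
Lemma fin_supp_delta v : fin_supp (delta v).
Proof. by exists [:: v] => w; rewrite /delta inE; case: (w == v); rewrite ?eqxx. Qed.
Lemma fin_supp_sum I (r : seq I) (F : I -> R) :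
  (forall i, fin_supp (F i)) -> fin_supp (\sum_(i <- r) F i).
Proof.
move=> h; elim: r => [|a r IH]; first by rewrite big_nil; exact: fin_supp0.
by rewrite big_cons; apply: fin_suppD.
Qed.
Lemma fin_supp_prod I (r : seq I) (F : I -> R) :
  (forall i, fin_supp (F i)) -> fin_supp (\prod_(i <- r) F i).
Proof.
move=> h; elim: r => [|a r IH]; first by rewrite big_nil; exact: fin_supp_cst.
by rewrite big_cons; apply: fin_suppM.
Qed.

Lemma in_k0X_fin f : in_k0X f -> fin_supp f. Proof. by case. Qed.
Lemma in_k0X0 : in_k0X (0 : R). Proof. by split; [apply: fin_supp0 | ]. Qed.
Lemma in_k0XD f g : in_k0X f -> in_k0X g -> in_k0X (f + g).
Proof. by move=> [hf f0] [hg g0]; split; [apply: fin_suppD | rewrite evalD f0 g0 addr0]. Qed.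
Lemma in_k0XMl f g : in_k0X f -> fin_supp g -> in_k0X (f * g).
Proof. by move=> [hf f0] hg; split; [apply: fin_suppM | rewrite mul_nil f0 mul0r]. Qed.
Lemma in_k0XMr f g : fin_supp f -> in_k0X g -> in_k0X (f * g).
Proof. by move=> hf [hg g0]; split; [apply: fin_suppM | rewrite mul_nil g0 mulr0]. Qed.
Lemma in_k0XM f g : in_k0X f -> in_k0X g -> in_k0X (f * g).
Proof. by move=> hf [hg _]; apply: in_k0XMl. Qed.
Lemma in_k0X_sum I (r : seq I) (P : pred I) (F : I -> R) :
  (forall i, P i -> in_k0X (F i)) -> in_k0X (\sum_(i <- r | P i) F i).
Proof.
move=> h; elim: r => [|a r IH]; first by rewrite big_nil; exact: in_k0X0.
by rewrite big_cons; case: ifP => // /h ha; apply: in_k0XD.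
Qed.

Lemma in_k0X_prod I (r : seq I) (F : I -> R) :
  (forall i, in_k0X (F i)) -> (0 < size r)%N -> in_k0X (\prod_(i <- r) F i).
Proof.
move=> hF; case: r => [|i r] // _; rewrite big_cons; apply: in_k0XMl => //.
by apply: fin_supp_prod => j; apply: in_k0X_fin.
Qed.

Lemma sym_k0 (c : nat -> R) I : (forall l, in_k0X (c l)) -> (0 < size I)%N ->
  in_k0X (sym c I).
Proof.
move=> kc I0; rewrite /sym big_seq; apply: in_k0X_sum => t.
by rewrite mem_permutations => /perm_size st; apply: in_k0X_prod; rewrite ?st.
Qed.

End FreeAlgebra.
Arguments cst {k} c.
Arguments delta {k} v.
Arguments covers {k} f s.

Section Substitution.
Variable k : fieldType.
Local Notation R := (FP k).
Implicit Types (f g : R) (s : nat -> R).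

Definition mon s (w : word) : R := \prod_(l <- w) s l.

(* [subst s] replaces the letter [x_(l+1)] by [s l]; [supp_seq f] lists a
   support of [f] whenever [f] is finitely supported. *)
Definition supp_seq f : seq word := epsilon (inhabits [::]) (covers f).
Definition subst s f : R := \sum_(w <- undup (supp_seq f)) cst (f w) * mon s w.

Lemma covers_supp_seq f : fin_supp f -> covers f (undup (supp_seq f)).
Proof.
move=> hf w nz; rewrite mem_undup; exact: (epsilon_spec (inhabits [::]) (covers f) hf).
Qed.

Lemma eq_big_covers f (t1 t2 : seq word) (F : word -> R) :
  uniq t1 -> uniq t2 -> covers f t1 -> covers f t2 ->
  (forall w, f w = 0 -> F w = 0) -> \sum_(w <- t1) F w = \sum_(w <- t2) F w.
Proof.
move=> u1 u2 c1 c2 hF.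
have e (a b : seq word) : covers f b ->
    \sum_(w <- a) F w = \sum_(w <- filter (mem b) a) F w.
  move=> cb; rewrite big_filter [RHS]big_mkcond; apply: eq_bigr => w _.
  by case: ifP => // /negbT /negP wb; case: (f w =P 0) => [/hF // | /eqP /cb /wb].
rewrite (e t1 t2 c2) (e t2 t1 c1); apply: perm_big; apply: uniq_perm; rewrite ?filter_uniq //.
by move=> w; rewrite !mem_filter andbC.
Qed.

Lemma substE s f (t : seq word) : fin_supp f -> uniq t -> covers f t ->
  subst s f = \sum_(w <- t) cst (f w) * mon s w.
Proof.
move=> hf ut ct; apply: (eq_big_covers (f := f)) => //; first exact: undup_uniq.
  exact: covers_supp_seq.
by move=> w ->; rewrite cst0 mul0r.
Qed.

Lemma fpoly_expand f (t : seq word) : uniq t -> covers f t ->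
  f = \sum_(w <- t) cst (f w) * delta w.
Proof.
move=> ut ct; apply: funext => x; rewrite eval_sum.
under eq_bigr do rewrite cst_mulE.
case xt: (x \in t).
  rewrite (bigD1_seq x) //= /delta eqxx mulr1 big1 ?addr0 // => w wx.
  by rewrite eq_sym (negbTE wx) mulr0.
rewrite big1_seq => [|w /andP[_ wt]]; last first.
  by rewrite /delta; case: eqP => [xw|]; [rewrite xw wt in xt | rewrite mulr0].
by case: (f x =P 0) => // /eqP /ct; rewrite xt.
Qed.

Lemma substD s f g : fin_supp f -> fin_supp g -> subst s (f + g) = subst s f + subst s g.
Proof.
move=> hf hg; set t := undup (supp_seq f ++ supp_seq g).
have cf : covers f t.
  by move=> w /(covers_supp_seq hf); rewrite !mem_undup mem_cat => ->.
have cg : covers g t.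
  by move=> w /(covers_supp_seq hg); rewrite !mem_undup mem_cat orbC => ->.
have cfg : covers (f + g) t.
  by move=> w; rewrite evalD; case: (f w =P 0) => [->|/eqP /cf //]; rewrite add0r; exact: cg.
rewrite !(@substE s _ t) ?undup_uniq //; last exact: fin_suppD.
by rewrite -big_split; apply: eq_bigr => w _; rewrite evalD cstD mulrDl.
Qed.

Lemma subst_cst s c f : fin_supp f -> subst s (cst c * f) = cst c * subst s f.
Proof.
move=> hf; have cf := covers_supp_seq hf.
have ccf : covers (cst c * f) (undup (supp_seq f)).
  by move=> w; rewrite cst_mulE => nz; apply: cf; apply: contraNneq nz => ->; rewrite mulr0.
rewrite (substE _ _ (undup_uniq _) ccf); last by apply: fin_suppM => //; exact: fin_supp_cst.
rewrite (substE _ hf (undup_uniq _) cf) mulr_sumr; apply: eq_bigr => w _.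
by rewrite cst_mulE cstM mulrA.
Qed.

Lemma subst_delta s v : subst s (delta v) = mon s v.
Proof.
have cv : covers (@delta k v) [:: v].
  by move=> w; rewrite /delta mem_seq1; case: (w == v); rewrite ?eqxx.
by rewrite (substE _ (fin_supp_delta _ _) _ cv) // big_seq1 /delta eqxx cst1 mul1r.
Qed.

Lemma subst_sum s I (r : seq I) (F : I -> R) : (forall i, fin_supp (F i)) ->
  subst s (\sum_(i <- r) F i) = \sum_(i <- r) subst s (F i).
Proof.
move=> h; elim: r => [|a r IH].
  by rewrite !big_nil (substE _ (fin_supp0 k) (t := [::])) ?big_nil // => w; rewrite eqxx.
by rewrite !big_cons substD ?IH //; apply: fin_supp_sum.
Qed.

Lemma mon_cat s w1 w2 : mon s (w1 ++ w2) = mon s w1 * mon s w2.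
Proof. by rewrite /mon big_cat. Qed.

Lemma cst_mulACA a b (x y : R) : (cst a * x) * (cst b * y) = cst (a * b) * (x * y).
Proof. by rewrite cstM -!mulrA; congr (_ * _); rewrite !mulrA cstC. Qed.

Lemma fin_supp_cst_delta c w : fin_supp (cst c * @delta k w).
Proof. by apply: fin_suppM; [apply: fin_supp_cst | apply: fin_supp_delta]. Qed.

Lemma substM s f g : fin_supp f -> fin_supp g -> subst s (f * g) = subst s f * subst s g.
Proof.
move=> hf hg; have cf := covers_supp_seq hf; have cg := covers_supp_seq hg.
rewrite {1}(fpoly_expand (undup_uniq _) cf) {1}(fpoly_expand (undup_uniq _) cg).
rewrite (substE _ hf (undup_uniq _) cf) (substE _ hg (undup_uniq _) cg) !big_distrl /=.
rewrite subst_sum => [|w1]; last by apply: fin_suppM; [|apply: fin_supp_sum => w2];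
  exact: fin_supp_cst_delta.
apply: eq_bigr => w1 _; rewrite !big_distrr /= subst_sum => [|w2]; last first.
  by rewrite cst_mulACA delta_mul; exact: fin_supp_cst_delta.
apply: eq_bigr => w2 _.
by rewrite !cst_mulACA delta_mul subst_cst ?subst_delta ?mon_cat //; exact: fin_supp_delta.
Qed.

Lemma subst_k0 s f : (forall l, in_k0X (s l)) -> in_k0X f -> in_k0X (subst s f).
Proof.
move=> hs hf; apply: in_k0X_sum => -[|l w] _.
  by case: hf => _ ->; rewrite cst0 mul0r; exact: in_k0X0.
by apply: in_k0XMr; [apply: fin_supp_cst | apply: in_k0X_prod].
Qed.

Lemma subst_endo s : (forall l, in_k0X (s l)) -> is_endo (subst s).
Proof.
move=> hs; split; first by move=> f; apply: subst_k0.
split; first by move=> f g hf hg; apply: substD; apply: in_k0X_fin.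
split; first by move=> c f hf; rewrite !pscaleE subst_cst //; apply: in_k0X_fin.
by move=> f g hf hg; apply: substM; apply: in_k0X_fin.
Qed.

End Substitution.

Section Endomorphisms.
Variable k : fieldType.
Local Notation R := (FP k).
Variable phi : R -> R.
Hypothesis phi_endo : is_endo phi.

Lemma endo0 : phi 0 = 0.
Proof.
case: phi_endo => _ [phiD _].
have := phiD (0 : R) (0 : R) (in_k0X0 k) (in_k0X0 k); rewrite !paddE addr0 => e.
by apply: (@addrI R (phi 0)); rewrite addr0 -e.
Qed.

Lemma endo_sum I (r : seq I) (P : pred I) (F : I -> R) :
  (forall i, P i -> in_k0X (F i)) ->
  phi (\sum_(i <- r | P i) F i) = \sum_(i <- r | P i) phi (F i).
Proof.
move=> kF; elim: r => [|a r IH]; first by rewrite !big_nil endo0.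
rewrite !big_cons; case: ifP => // Pa; case: phi_endo => _ [phiD _].
by rewrite -paddE phiD ?IH //; [exact: kF | exact: in_k0X_sum].
Qed.

Lemma endo_cst c f : in_k0X f -> phi (cst c * f) = cst c * phi f.
Proof. by case: phi_endo => _ [_ [phiZ _]] kf; rewrite -!pscaleE phiZ. Qed.

Lemma endo_prod (s : nat -> R) t : (forall l, in_k0X (s l)) -> (0 < size t)%N ->
  phi (\prod_(l <- t) s l) = \prod_(l <- t) phi (s l).
Proof.
case: phi_endo => _ [_ [_ phiM]] ks; elim: t => [|a t IH] // _.
case: t IH => [|b t] IH; first by rewrite !big_seq1.
by rewrite big_cons [RHS]big_cons -pmulE phiM ?IH //; apply: in_k0X_prod.
Qed.

Lemma endo_sym (c : nat -> R) I : (forall l, in_k0X (c l)) -> (0 < size I)%N ->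
  phi (sym c I) = sym (fun l => phi (c l)) I.
Proof.
move=> kc I0; rewrite /sym big_seq [RHS]big_seq endo_sum => [|t].
  by apply: eq_bigr => t /[!mem_permutations] /perm_size st; apply: endo_prod; rewrite ?st.
by rewrite mem_permutations => /perm_size st; apply: in_k0X_prod; rewrite ?st.
Qed.

End Endomorphisms.

Section Tspaces.
Variable k : fieldType.
Local Notation R := (FP k).
Implicit Types (A V : R -> Prop) (f g : R).

Section Subspace.
Variable V : R -> Prop.
Hypothesis V_subspace : is_subspace V.

Lemma subspace_k0 f : V f -> in_k0X f. Proof. by case: V_subspace => h _; apply: h. Qed.
Lemma subspace0 : V 0. Proof. by case: V_subspace => _ []. Qed.
Lemma subspaceD f g : V f -> V g -> V (f + g).
Proof. by case: V_subspace => _ [_ [h _]]; apply: h. Qed.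
Lemma subspace_cst c f : V f -> V (cst c * f).
Proof. by case: V_subspace => _ [_ [_ h]] Vf; rewrite -pscaleE; apply: h. Qed.
Lemma subspaceB f g : V f -> V g -> V (f - g).
Proof.
move=> Vf Vg; have -> : - g = cst (-1) * g by apply: funext => w; rewrite cst_mulE mulN1r.
by apply: subspaceD => //; apply: subspace_cst.
Qed.

End Subspace.

Lemma k0_Tspace : is_Tspace (@in_k0X k).
Proof.
split; last by move=> phi f [h _]; apply: h.
split=> //; split; first exact: in_k0X0.
split; first by move=> f g; apply: in_k0XD.
by move=> c f kf; rewrite pscaleE; apply: in_k0XMr => //; apply: fin_supp_cst.
Qed.

Lemma Tgen_incl A a : A a -> Tgen A a.
Proof. by move=> Aa V _; apply. Qed.

Lemma Tgen_Tspace A : (forall a, A a -> in_k0X a) -> is_Tspace (Tgen A).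
Proof.
move=> kA; split=> [|phi f phi_endo Af V hV AV]; last first.
  by apply: hV.2 => //; apply: Af.
split=> [f Af | ]; first exact: Af k0_Tspace kA.
split=> [V [[_ [V0 _]] _] //|]; split.
  by move=> f g Af Ag V hV AV; apply: (subspaceD hV.1); [apply: Af | apply: Ag].
by move=> c f Af V hV AV; rewrite pscaleE; apply: (subspace_cst hV.1); apply: Af.
Qed.

Lemma Tgen_setMr_Tspace V u : is_Tspace V -> in_k0X u -> is_Tspace (Tgen (setMr V u)).
Proof.
by move=> hV ku; apply: Tgen_Tspace => _ [a Va ->]; apply: in_k0XM (subspace_k0 hV.1 Va) ku.
Qed.

Lemma Tgen_setMl_Tspace V u : is_Tspace V -> in_k0X u -> is_Tspace (Tgen (setMl u V)).
Proof.
by move=> hV ku; apply: Tgen_Tspace => _ [a Va ->]; apply: in_k0XM ku (subspace_k0 hV.1 Va).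
Qed.

Lemma sum3_Tspace V1 V2 V3 : is_Tspace V1 -> is_Tspace V2 -> is_Tspace V3 ->
  is_Tspace (sum3 V1 V2 V3).
Proof.
move=> [s1 e1] [s2 e2] [s3 e3]; split=> [|phi _ phi_endo [a [b [c [Va Vb Vc ->]]]]].
  split=> [_ [a [b [c [Va Vb Vc ->]]]] |].
    apply: in_k0XD; last exact (subspace_k0 s3 Vc).
    by apply: in_k0XD; [exact (subspace_k0 s1 Va) | exact (subspace_k0 s2 Vb)].
  split; first by exists (0 : R), (0 : R), (0 : R); split; rewrite ?paddE ?addr0 //;
    apply: subspace0.
  split=> [_ _ [a [b [c [Va Vb Vc ->]]]] [a' [b' [c' [Va' Vb' Vc' ->]]]] |].
    exists ((a : R) + a'), ((b : R) + b'), ((c : R) + c'); split; try exact: subspaceD.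
    by rewrite !paddE addrACA [(a : R) + b + _]addrACA.
  move=> x _ [a [b [c [Va Vb Vc ->]]]].
  exists (cst x * (a : R)), (cst x * (b : R)), (cst x * (c : R)).
  split; try exact: subspace_cst.
  by rewrite pscaleE !paddE !mulrDr.
have ka := subspace_k0 s1 Va; have kb := subspace_k0 s2 Vb; have kc := subspace_k0 s3 Vc.
case: (phi_endo) => _ [phiD _]; exists (phi a), (phi b), (phi c).
by split; [exact: e1 | exact: e2 | exact: e3 | rewrite !phiD //; apply: in_k0XD].
Qed.

End Tspaces.

Section StandardPolynomial.
Variable k : fieldType.
Local Notation R := (FP k).

Definition letter (l : nat) : R := delta [:: l].

Lemma letter_k0 l : in_k0X (letter l).
Proof. by split; [apply: fin_supp_delta | ]. Qed.

Lemma prod_letter w : \prod_(l <- w) letter l = delta w.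
Proof.
elim: w => [|l w IH]; first by rewrite big_nil; apply: funext => -[].
by rewrite big_cons IH delta_mul.
Qed.

Lemma subst_letter s l : subst s (letter l) = s l.
Proof. by rewrite subst_delta /mon big_seq1. Qed.

Definition perm_word d (s : 'S_d) : word := [seq nat_of_ord (s i) | i <- enum 'I_d].

Lemma nth_perm_word d (s : 'S_d) (i : 'I_d) : nth 0%N (perm_word s) i = s i.
Proof. by rewrite /perm_word (nth_map i) ?nth_ord_enum // size_enum_ord. Qed.

Lemma perm_words d : perm_eq (map (@perm_word d) (enum 'S_d)) (permutations (iota 0 d)).
Proof.
apply: uniq_perm; [ | exact: permutations_uniq | ].
  rewrite map_inj_uniq ?enum_uniq // => s1 s2 e; apply/permP => i; apply: val_inj.
  by move: (congr1 (fun t => nth 0%N t i) e); rewrite !nth_perm_word.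
move=> t; rewrite mem_permutations; apply/mapP/idP => [[s _ ->] | pt].
  rewrite /perm_word -val_enum_ord (map_comp val s); apply: perm_map.
  apply: uniq_perm; first (rewrite map_inj_uniq ?enum_uniq //; exact: perm_inj).
    exact: enum_uniq.
  move=> x; rewrite mem_enum; apply/mapP; exists ((s^-1)%g x); rewrite ?mem_enum ?permKV //.
have st : size t = d by rewrite (perm_size pt) size_iota.
have ut : uniq t by rewrite (perm_uniq pt) iota_uniq.
have lt i : (i < d)%N -> (nth 0%N t i < d)%N.
  move=> lid; have : nth 0%N t i \in iota 0 d by rewrite -(perm_mem pt) mem_nth // st.
  by rewrite mem_iota.
pose f (i : 'I_d) : 'I_d := Ordinal (lt i (ltn_ord i)).
have f_inj : injective f.
  move=> i j /(congr1 val) /= /eqP; rewrite nth_uniq ?st // => /eqP; exact: val_inj.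
exists (perm f_inj); first by rewrite mem_enum.
apply: (@eq_from_nth _ 0%N); first by rewrite size_map size_enum_ord st.
by move=> i; rewrite st => lid; rewrite (nth_perm_word _ (Ordinal lid)) permE.
Qed.

Lemma Sd_sym d : Sd k d = sym letter (iota 0 d).
Proof.
rewrite /sym -(perm_big _ (perm_words d)) big_map big_enum /=.
apply: funext => w; rewrite eval_sum; apply: eq_bigr => s _.
by rewrite prod_letter.
Qed.

Lemma Sd_k0 d : (0 < d)%N -> in_k0X (Sd k d).
Proof. by move=> d0; rewrite Sd_sym; apply: sym_k0; [exact: letter_k0 | rewrite size_iota]. Qed.

Lemma Sd1_Tspace d : (0 < d)%N -> is_Tspace (Sd1 (k := k) d).
Proof. by move=> d0; apply: Tgen_Tspace => _ ->; apply: Sd_k0. Qed.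

Lemma Sd1_sym d (c : nat -> R) : (0 < d)%N -> (forall l, in_k0X (c l)) ->
  Sd1 d (sym c (iota 0 d)).
Proof.
move=> d0 kc; have -> : sym c (iota 0 d) = subst c (Sd k d).
  rewrite Sd_sym (endo_sym (subst_endo kc)) ?size_iota //; last exact: letter_k0.
  by apply: eq_in_sym => l _; rewrite subst_letter.
have [_ Sd1_endo] := Sd1_Tspace d0.
by apply: Sd1_endo; [exact: subst_endo | move=> V _; apply].
Qed.

Definition sym_closed (d : nat) (P : R -> Prop) :=
  [/\ P 0, (forall f g, P f -> P g -> P (f + g)), (forall a f, P f -> P (cst a * f))
    & forall c : nat -> R, (forall l, in_k0X (c l)) -> P (sym c (iota 0 d))].

Definition sym_span (d : nat) (f : R) := in_k0X f /\ forall P, sym_closed d P -> P f.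

Lemma sym_span_Tspace d : (0 < d)%N -> is_Tspace (sym_span d).
Proof.
move=> d0; split.
  split=> [f [] // | ]; split; first by split=> [|P []]; [exact: in_k0X0 |].
  split=> [f g [kf Pf] [kg Pg] | a f [kf Pf]]; rewrite ?paddE ?pscaleE.
    split=> [|P hP]; first exact: in_k0XD kf kg.
    by case: (hP) => _ PD _ _; apply: PD; [apply: Pf | apply: Pg].
  split=> [|P hP]; first by apply: in_k0XMr kf; exact: fin_supp_cst.
  by case: (hP) => _ _ PZ _; apply: PZ; apply: Pf.
move=> phi f phi_endo [kf Pf]; have [phi_k0 [phiD _]] := phi_endo.
split=> [|P [P0 PD PZ Psym]]; first exact: phi_k0.
suff : in_k0X f /\ P (phi f) by case.
apply: (Pf (fun g => in_k0X g /\ P (phi g))); split.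
- by split; [exact: in_k0X0 | rewrite endo0].
- move=> g h [kg Pg] [kh Ph]; split; first exact: in_k0XD kg kh.
  by rewrite -paddE phiD //; apply: PD.
- move=> a g [kg Pg]; split; first by apply: in_k0XMr kg; exact: fin_supp_cst.
  by rewrite endo_cst //; apply: PZ.
move=> c kc; split; first by apply: sym_k0; rewrite ?size_iota.
by rewrite endo_sym ?size_iota //; apply: Psym => l; apply: phi_k0.
Qed.

Lemma Sd1_ind d (P : R -> Prop) : (0 < d)%N -> sym_closed d P ->
  forall f, Sd1 d f -> P f.
Proof.
move=> d0 hP f Sf; have [_ ] : sym_span d f; last by apply.
apply: Sf (sym_span_Tspace d0) _ => _ ->; split; first exact: Sd_k0.
by move=> Q [_ _ _ Qsym]; rewrite Sd_sym; apply: Qsym; exact: letter_k0.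
Qed.

Lemma Sd1_mul2r n (u v a : R) : in_k0X u -> in_k0X v -> Sd1 n.+1 a ->
  sum3 (Sd1 n.+1) (Tgen (setMr (Sd1 n.+1) u)) (Tgen (setMr (Sd1 n.+1) v)) (a * u * v).
Proof.
move=> ku kv; have hS := Sd1_Tspace (ltn0Sn n).
have hT := sum3_Tspace hS (Tgen_setMr_Tspace hS ku) (Tgen_setMr_Tspace hS kv).
apply: (Sd1_ind (P := fun a => sum3 _ _ _ (a * u * v))) (ltn0Sn n) _ a.
split=> [|f g Tf Tg|c f Tf|c kc].
- by rewrite !mul0r; exact (subspace0 hT.1).
- by rewrite !mulrDl; exact (subspaceD hT.1 Tf Tg).
- by rewrite -!mulrA; apply (subspace_cst hT.1); rewrite !mulrA.
have [b [x [y [Sb Sx Sy ->]]]] := sym_mul2r_decomposition (@in_k0XM k)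
  (subspace0 hS.1) (subspaceB hS.1) (fun c => Sd1_sym (ltn0Sn n)) kc ku kv.
by exists b, (x * u), (y * v); split=> //; apply: Tgen_incl; [exists x | exists y].
Qed.

Lemma Sd1_mul2l n (u v a : R) : in_k0X u -> in_k0X v -> Sd1 n.+1 a ->
  sum3 (Sd1 n.+1) (Tgen (setMl u (Sd1 n.+1))) (Tgen (setMl v (Sd1 n.+1))) (u * v * a).
Proof.
move=> ku kv; have hS := Sd1_Tspace (ltn0Sn n).
have hT := sum3_Tspace hS (Tgen_setMl_Tspace hS ku) (Tgen_setMl_Tspace hS kv).
apply: (Sd1_ind (P := fun a => sum3 _ _ _ (u * v * a))) (ltn0Sn n) _ a.
split=> [|f g Tf Tg|c f Tf|c kc].
- by rewrite mulr0; exact (subspace0 hT.1).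
- by rewrite mulrDr; exact (subspaceD hT.1 Tf Tg).
- by rewrite mulrA -cstC -mulrA; exact (subspace_cst hT.1 _ Tf).
have [b [x [y [Sb Sx Sy ->]]]] := sym_mul2l_decomposition (@in_k0XM k)
  (subspace0 hS.1) (subspaceB hS.1) (fun c => Sd1_sym (ltn0Sn n)) kc ku kv.
by exists b, (u * x), (v * y); split=> //; apply: Tgen_incl; [exists x | exists y].
Qed.

End StandardPolynomial.

Local Close Scope ring_scope.

Theorem proposition3p1 (k : fieldType) (p : nat) (hp : prime p)
  (hchar : (p \in [pchar k])%R) (d : nat) (hd : 0 < d) (u v : fpoly k) :
  in_k0X u -> in_k0X v ->
  (forall f, Tgen (setMr (setMr (Sd1 d) u) v) f ->
     sum3 (Sd1 d) (Tgen (setMr (Sd1 d) u)) (Tgen (setMr (Sd1 d) v)) f) /\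
  (forall f, Tgen (setMl u (setMl v (Sd1 d))) f ->
     sum3 (Sd1 d) (Tgen (setMl u (Sd1 d))) (Tgen (setMl v (Sd1 d))) f).
Proof.
move=> ku kv; case: d hd => // n _; have hS := Sd1_Tspace k (ltn0Sn n).
split=> f; apply.
- exact: sum3_Tspace hS (Tgen_setMr_Tspace hS ku) (Tgen_setMr_Tspace hS kv).
- by move=> _ [_ [a Sa ->] ->]; apply: Sd1_mul2r.
- exact: sum3_Tspace hS (Tgen_setMl_Tspace hS ku) (Tgen_setMl_Tspace hS kv).
- by move=> _ [_ [a Sa ->] ->]; rewrite !pmulE mulrA; apply: Sd1_mul2l.
Qed.
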